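(* Let $\mathcal{S}$ and $\mathcal{S}'$ be square-free stratified staged trees, each of whose stages consist of situations at a single level, which are statistically equivalent via a bijection $\varphi:\Lambda(\mathcal{S})\to\Lambda(\mathcal{S}')$. Let $\alpha>0$, let $\mathcal{D}=(N_\lambda)_{\lambda\in\Lambda(\mathcal{S})}$ be a complete data sample on $\mathcal{S}$ and $\mathcal{D}'$ the sample on $\mathcal{S}'$ with $N'_{\varphi(\lambda)}=N_\lambda$. Then $\mathrm{CS\text{-}BDeu}(\mathcal{S},\mathcal{D};\alpha)=\mathrm{CS\text{-}BDeu}(\mathcal{S}',\mathcal{D}';\alpha)$.
   Context: An event tree is a finite directed rooted tree with edges directed away from the root; leaves have no outgoing edges, other nodes are situations; the level of a node is its distance from the root. A staged tree is an event tree with a partition of its situations into stages, situations in a common stage having the same number of outgoing edges, labelled consistently, with the $k$-th edges sharing a transition probability; its model is the set of distributions on the set $\Lambda(\mathcal{S})$ of root-to-leaf paths obtained by choosing a positive probability vector for each stage and multiplying edge probabilities along paths. Square-free: no two situations on one root-to-leaf path lie in the same stage. $\mathcal{S},\mathcal{S}'$ are statistically equivalent via a bijection $\varphi$ if the model of $\mathcal{S}$ equals $\{p\circ\varphi: p$ in the model of $\mathcal{S}'\}$. For variables $X_1,\dots,X_n$ with finite state spaces $\mathbb{X}_i$, an event tree is $\mathcal{X}$-compatible if its nodes are the root together with one node $v(x_1,\dots,x_k)$ for each $(x_1,\dots,x_k)\in\mathbb{X}_1\times\dots\times\mathbb{X}_k$, $1\le k\le n$, with edges from $v(x_1,\dots,x_{k-1})$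 to $v(x_1,\dots,x_k)$; a staged tree is stratified if its event tree is $\mathcal{X}$-compatible for some $\mathcal{X}$. Data: a complete sample assigns counts $N_\lambda$ to paths; $n_{jk}$ is the number of units passing through the $k$-th edge of some situation in stage $u_j$, $\overline n_j=\sum_k n_{jk}$. The BD-metric with hyperparameters $\alpha_{jk}$, $\overline\alpha_j=\sum_k\alpha_{jk}$, is $\prod_j\big[\Gamma(\overline\alpha_j)/\Gamma(\overline\alpha_j+\overline n_j)\prod_k\Gamma(\alpha_{jk}+n_{jk})/\Gamma(\alpha_{jk})\big]$. CS-BDeu: hyperparameters are propagated forward from the root. The root stage has $\dot\alpha=\alpha$. For a stage $u_{ij}$ at level $i-1$ with $h_{ij}$ situations and $r_{ij}$ outgoing edges per situation, $\dot\alpha_{ij}$ is the sum of the (individual) hyperparameters of the edges entering its situations, the stage edge hyperparameters are $\alpha_{ijk}=\dot\alpha_{ij}/r_{ij}$, and each individual edge emanating from a situation of $u_{ij}$ along label $k$ receives hyperparameter $\alpha_{ijk}/h_{ij}$. The CS-BDeu score is the BD-metric with stage hyperparameters $\alpha_{ijk}$. *)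

From mathcomp Require Import all_boot all_order all_algebra.
From mathcomp Require Import reals.
Set Implicit Arguments. Unset Strict Implicit. Unset Printing Implicit Defensive.
Import Order.TTheory GRing.Theory Num.Theory.
Local Open Scope ring_scope.

(* Variables X_1..X_n have state spaces of sizes d = [:: d_1; ...; d_n]
   (state space of X_{i+1} is identified with 'I_(nth 0 d i)).
   A node at level k is the sequence of its first k coordinates (x_1..x_k).
   - st v : the stage of situation v is the pair (size v, st v); thus stages
     are exactly the classes of a partition of the situations, each class
     lying in one level.
   - lab v : the labelling of the outgoing edges of situation v: the edge
     from v to v ++ [:: x] carries label  lab v x  in [0, d_{k+1}).     *)
Record sstree := SStree {
  sdeg : seq nat;
  sstage : seq nat -> nat;
  slab : seq nat -> nat -> nat }.

Definition nlev (T : sstree) : nat := size (sdeg T).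
Definition dk (T : sstree) (k : nat) : nat := nth 0%N (sdeg T) k.

Definition paths (T : sstree) : finType :=
  {dffun forall i : 'I_(nlev T), 'I_(dk T i)}.

Definition pth (T : sstree) (l : paths T) : seq nat :=
  [seq nat_of_ord (l i) | i <- enum 'I_(nlev T)].

Definition prefix (T : sstree) (k : nat) (l : paths T) : seq nat :=
  take k (pth l).

(* the value x_{k+1} taken by path l at level k (the edge leaving level k) *)
Definition coord (T : sstree) (k : nat) (l : paths T) : nat := nth 0%N (pth l) k.

Definition elab (T : sstree) (k : nat) (l : paths T) : nat :=
  slab T (prefix k l) (coord k l).

Definition wf_sstree (T : sstree) : Prop :=
  (forall k, (k < nlev T)%N -> (0 < dk T k)%N) /\
  (forall (l : paths T) k, (k < nlev T)%N ->
     (forall x, (x < dk T k)%N -> (slab T (prefix k l) x < dk T k)%N) /\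
     {in [pred x | (x < dk T k)%N] &, injective (slab T (prefix k l))}).

Definition nodes (T : sstree) (k : nat) : seq (seq nat) :=
  undup [seq prefix k l | l <- enum (paths T)].

Definition stages (T : sstree) (k : nat) : seq nat :=
  undup [seq sstage T v | v <- nodes T k].

Definition hcount (T : sstree) (k s : nat) : nat :=
  count (fun v => sstage T v == s) (nodes T k).

Definition model (R : realType) (T : sstree) (p : paths T -> R) : Prop :=
  exists theta : nat -> nat -> nat -> R,
    (forall k s, (k < nlev T)%N ->
       (forall j, (j < dk T k)%N -> 0 < theta k s j) /\
       \sum_(j < dk T k) theta k s j = 1) /\
    forall l : paths T,
      p l = \prod_(i < nlev T) theta i (sstage T (prefix i l)) (elab i l).

Definition stat_equiv (R : realType) (T T' : sstree)
    (phi : paths T -> paths T') : Prop :=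
  bijective phi /\
  forall p : paths T -> R,
    model p <-> exists p' : paths T' -> R, model p' /\ forall l, p l = p' (phi l).

(* gratio a m = Gamma(a + m) / Gamma(a) for a natural number m (rising factorial) *)
Definition gratio (R : realType) (a : R) (m : nat) : R := \prod_(i < m) (a + i%:R).

(* propagated stage hyperparameter  \dot alpha  of stage (k, s) *)
Fixpoint adot (R : realType) (T : sstree) (alpha : R) (k s : nat) : R :=
  match k with
  | 0 => alpha
  | k'.+1 =>
      \sum_(v <- nodes T k'.+1 | sstage T v == s)
        (* individual hyperparameter of the edge entering v from its parent w *)
        let w := take k' v in
        adot T alpha k' (sstage T w) / (dk T k')%:R
          / (hcount T k' (sstage T w))%:R
  end.

Definition aedge (R : realType) (T : sstree) (alpha : R) (k s j : nat) : R :=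
  adot T alpha k s / (dk T k)%:R.

Definition ncount (T : sstree) (N : paths T -> nat) (k s j : nat) : nat :=
  \sum_(l : paths T | (sstage T (prefix k l) == s) && (elab k l == j)) N l.

Definition CS_BDeu (R : realType) (T : sstree) (N : paths T -> nat) (alpha : R) : R :=
  \prod_(k < nlev T) \prod_(s <- stages T k)
    (let abar := \sum_(j < dk T k) aedge T alpha k s j in
     let nbar := (\sum_(j < dk T k) ncount N k s j)%N in
     (gratio abar nbar)^-1 *
     \prod_(j < dk T k) gratio (aedge T alpha k s j) (ncount N k s j)).

(* Put w = alpha / |Lambda|.  Every node at level k has the same number
   d_k * ... * d_(n-1) of leaves below it, so the forward propagation of the
   CS-BDeu hyperparameters splits mass uniformly and, by induction on the
   level, the hyperparameter of the label-j edges of a stage is w times the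
   number of root-to-leaf paths through them.  Hence adding one observation on
   a path l multiplies the score by the product along l of the Dirichlet
   predictive probabilities (alpha_jk + n_jk) / (alphabar_j + nbar_j), which
   is the value at l of the maximum-likelihood distribution fitted to the
   pseudo-counts w + N.  By Gibbs' inequality this maximiser is unique, and
   the models of statistically equivalent trees correspond under phi, so both
   trees multiply their scores by the same factor; the scores agree by
   induction on the data, read as a sequence of observations. *)

From Pilot Require Import Defs.
From mathcomp Require Import all_boot all_order all_algebra.
From mathcomp Require Import reals exp.
From mathcomp Require Import zify ring lra.
Set Implicit Arguments. Unset Strict Implicit. Unset Printing Implicit Defensive.
Import Order.TTheory GRing.Theory Num.Theory.
(* re-imported so that [prefix] and [coord] are the tree notions, not those of seq and vector *)
Import Defs.
Local Open Scope ring_scope.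

Lemma leif_sum_seq (R : numDomainType) (I : eqType) (r : seq I) (C : pred I)
    (E1 E2 : I -> R) :
  (forall i, i \in r -> E1 i <= E2 i ?= iff C i) ->
  \sum_(i <- r) E1 i <= \sum_(i <- r) E2 i ?= iff all C r.
Proof.
elim: r => [|a r IHr] leE12; first by rewrite !big_nil; apply/leif_refl.
rewrite !big_cons /=; apply: leifD; first by apply: leE12; rewrite mem_head.
by apply: IHr => i ri; apply: leE12; rewrite inE ri orbT.
Qed.

Lemma sumr_const_seq (V : nmodType) (I : Type) (r : seq I) (P : pred I) (x : V) :
  \sum_(i <- r | P i) x = x *+ count P r.
Proof. by rewrite big_const_seq iter_addr_0. Qed.

Lemma big_pred1_uniq_seq (V : nmodType) (I : eqType) (r : seq I) (a : I) (F : I -> V) :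
  uniq r -> a \in r -> \sum_(i <- r | a == i) F i = F a.
Proof.
move=> r_uniq ar; rewrite big_mkcond (bigD1_seq a) //= eqxx big1 ?addr0 //.
by move=> i; rewrite eq_sym => /negbTE ->.
Qed.

Lemma partition_big_seq (I : finType) (J : eqType) (V : nmodType) (r : seq J)
    (p : I -> J) (P : pred I) (F : I -> V) :
  uniq r -> (forall i, P i -> p i \in r) ->
  \sum_(i | P i) F i = \sum_(j <- r) \sum_(i | P i && (p i == j)) F i.
Proof.
move=> r_uniq p_r; under [RHS]eq_bigr => j _ do rewrite big_mkcond /=.
rewrite exchange_big [LHS]big_mkcond; apply: eq_bigr => i _.
case: ifP => Pi /=; last by rewrite big1.
by rewrite -big_mkcond big_pred1_uniq_seq ?p_r.
Qed.

Lemma ln_prod (R : realType) (I : Type) (r : seq I) (P : pred I) (F : I -> R) :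
  (forall i, P i -> 0 < F i) ->
  ln (\prod_(i <- r | P i) F i) = \sum_(i <- r | P i) ln (F i).
Proof.
move=> F_gt0; elim: r => [|a r IHr]; first by rewrite !big_nil ln1.
rewrite !big_cons; case: ifP => // Pa.
by rewrite lnM ?posrE ?F_gt0 ?prodr_gt0 ?IHr.
Qed.

Lemma count_mem_map_inj (I J : eqType) (f : I -> J) (s : seq I) x :
  injective f -> count_mem (f x) (map f s) = count_mem x s.
Proof.
by move=> f_inj; rewrite count_map; apply: eq_count => y; rewrite /= (inj_eq f_inj).
Qed.

Lemma exists_seq_count_mem (I : finType) (N : I -> nat) :
  exists s : seq I, forall x, N x = count_mem x s.
Proof.
exists (flatten [seq nseq (N y) y | y <- index_enum I]) => x.
rewrite count_flatten sumnE !big_map (bigD1 x) //= count_nseq /= eqxx mul1n.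
by rewrite big1 ?addn0 // => y /negbTE neq_yx; rewrite count_nseq /= neq_yx.
Qed.

Lemma inj_in_ltn_onto (d : nat) (f : nat -> nat) :
  (forall x, (x < d)%N -> (f x < d)%N) -> {in [pred x | (x < d)%N] &, injective f} ->
  forall y, (y < d)%N -> exists2 x, (x < d)%N & f x = y.
Proof.
move=> f_lt f_inj y lt_y.
have f_uniq : uniq (map f (iota 0 d)).
  by rewrite map_inj_in_uniq ?iota_uniq // => x z; rewrite !mem_iota !add0n; apply: f_inj.
have f_sub : {subset map f (iota 0 d) <= iota 0 d}.
  by move=> z /mapP [x]; rewrite !mem_iota !add0n => lt_x ->; apply: f_lt.
have [_ f_onto] := uniq_min_size f_uniq f_sub (eq_leq (esym (size_map f _))).
have : y \in map f (iota 0 d) by rewrite f_onto mem_iota.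
by case/mapP => x; rewrite mem_iota add0n => lt_x ->; exists x.
Qed.

Section Gibbs.
Variable R : realType.

Lemma leif_ln_subr1 (x : R) : 0 < x -> ln x <= x - 1 ?= iff (x == 1).
Proof.
move=> x_gt0; split.
  by have := @le_ln1Dx R (x - 1); rewrite [1 + _]addrC subrK; apply; lra.
apply/eqP/eqP => [eq_ln | ->]; last by rewrite ln1 subrr.
apply: contra_eq eq_ln => neq_x1.
have := @expR_gt1Dx R (ln x); rewrite ln_eq0 // neq_x1.
rewrite lnK ?posrE // => /(_ isT) lt_x; apply/eqP; lra.
Qed.

Lemma leif_gibbs (n : nat) (C th : 'I_n -> R) :
  (forall j, 0 < C j) -> (forall j, 0 < th j) -> \sum_j th j = 1 ->
  \sum_j C j * ln (th j) <= \sum_j C j * ln (C j / \sum_i C i)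
    ?= iff [forall j, th j == C j / \sum_i C i].
Proof.
move=> C_gt0 th_gt0 th_sum1; set S := \sum_i C i.
have S_gt0 : 0 < S.
  case: (pickP (@predT 'I_n)) => [j0 _ | no_j]; last first.
    by move: th_sum1; rewrite big_pred0 // => /eqP; rewrite eq_sym oner_eq0.
  by rewrite /S (bigD1 j0) //= ltr_wpDr ?sumr_ge0 // => i _; apply/ltW.
pose x j := th j * S / C j.
have x_gt0 j : 0 < x j by rewrite divr_gt0 ?mulr_gt0.
have th_x j : th j = C j / S * x j by rewrite /x; field; rewrite !gt_eqF.
have excess0 : \sum_j C j * (x j - 1) = 0.
  rewrite (eq_bigr (fun j => th j * S - C j)) => [|j _]; last first.
    by rewrite /x; field; rewrite gt_eqF.
  by rewrite sumrB -mulr_suml th_sum1 mul1r subrr.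
have -> : \sum_j C j * ln (C j / S) = \sum_j (C j * ln (C j / S) + C j * (x j - 1)).
  by rewrite big_split /= excess0 addr0.
apply: (@leif_sum _ _ predT (fun j => th j == C j / S)) => j _.
rewrite {1}th_x lnM ?posrE ?x_gt0 ?divr_gt0 // mulrDr.
rewrite (mono_leif (lerD2l _)) (mono_leif (ler_pM2l (C_gt0 j))).
suff -> : (th j == C j / S) = (x j == 1) by apply: leif_ln_subr1.
by rewrite {1}th_x -{2}[C j / S]mulr1 (inj_eq (mulfI _)) // gt_eqF ?divr_gt0.
Qed.

End Gibbs.

Section DirichletMultinomial.
Variable R : realType.

Definition dirmult (d : nat) (a : nat -> R) (n : nat -> nat) : R :=
  (gratio (\sum_(j < d) a j) (\sum_(j < d) n j)%N)^-1 * \prod_(j < d) gratio (a j) (n j).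

Lemma gratio_gt0 (a : R) m : 0 < a -> 0 < gratio a m.
Proof. by move=> a_gt0; rewrite prodr_gt0 // => i _; rewrite ltr_wpDr. Qed.

Lemma gratioS (a : R) m : gratio a m.+1 = gratio a m * (a + m%:R).
Proof. by rewrite /gratio big_ord_recr. Qed.

Lemma eq_dirmult d (a : nat -> R) (n1 n2 : nat -> nat) :
  n1 =1 n2 -> dirmult d a n1 = dirmult d a n2.
Proof.
move=> eq_n; rewrite /dirmult.
by congr (_ ^-1 * _); [congr gratio; apply: eq_bigr | apply: eq_bigr] => j _; rewrite eq_n.
Qed.

Lemma dirmult_incr d (a : nat -> R) (n n1 : nat -> nat) j0 :
  (j0 < d)%N -> 0 < \sum_(j < d) a j -> (forall j, n1 j = (j0 == j) + n j)%N ->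
  dirmult d a n1 =
  dirmult d a n * ((a j0 + (n j0)%:R) / (\sum_(j < d) a j + (\sum_(j < d) n j)%:R)).
Proof.
move=> lt_j0 a_gt0 n1E.
have sum_n1 : (\sum_(j < d) n1 j = (\sum_(j < d) n j).+1)%N.
  rewrite (eq_bigr (fun j : 'I_d => (j0 == j) + n j)%N (fun j _ => n1E j)) big_split /=.
  rewrite (bigD1 (Ordinal lt_j0)) //= eqxx.
  by rewrite big1 // => j; rewrite -val_eqE /= eq_sym => /negbTE ->.
have prod_n1 : \prod_(j < d) gratio (a j) (n1 j) =
               \prod_(j < d) gratio (a j) (n j) * (a j0 + (n j0)%:R).
  rewrite (bigD1 (Ordinal lt_j0)) //= [in RHS](bigD1 (Ordinal lt_j0)) //= n1E eqxx gratioS.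
  rewrite mulrAC; congr (_ * _ * _); apply: eq_bigr => j.
  by rewrite -val_eqE /= eq_sym n1E => /negbTE ->.
rewrite /dirmult sum_n1 gratioS prod_n1 invfM; field.
by rewrite !gt_eqF ?gratio_gt0 ?ltr_wpDr.
Qed.

Lemma dirmult0 d (a : nat -> R) (n : nat -> nat) :
  (forall j, n j = 0)%N -> dirmult d a n = 1.
Proof.
move=> n0; rewrite (eq_dirmult _ _ n0) /dirmult big1_eq {1}/gratio big_ord0 invr1 mul1r.
by rewrite big1 // => j _; rewrite /gratio big_ord0.
Qed.

End DirichletMultinomial.

Section Paths.
Variable T : sstree.

Lemma nth_pth (l : paths T) (i : 'I_(nlev T)) : nth 0%N (pth l) i = l i.
Proof. by rewrite /pth (nth_map i) ?size_enum_ord // nth_ord_enum. Qed.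

Lemma coordE k (lt_k : (k < nlev T)%N) (l : paths T) : coord k l = l (Ordinal lt_k).
Proof. by rewrite /coord -nth_pth. Qed.

Lemma eq_prefix k (l l0 : paths T) :
  (prefix k l == prefix k l0) = [forall i : 'I_(nlev T), (i < k)%N ==> (l i == l0 i :> nat)].
Proof.
have size_pth (l1 : paths T) : size (pth l1) = nlev T by rewrite size_map size_enum_ord.
apply/eqP/forallP => [eq_l i | eq_l].
  apply/implyP => lt_ik; have := congr1 (nth 0%N ^~ i) eq_l.
  by rewrite /prefix !nth_take // !nth_pth => ->.
apply: (@eq_from_nth _ 0%N); first by rewrite /prefix !size_take !size_pth.
move=> i; rewrite /prefix size_take_min size_pth => lt_i.
have [lt_ik lt_in] : (i < k)%N /\ (i < nlev T)%N by split; lia.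
rewrite !nth_take //; have := eq_l (Ordinal lt_in); rewrite /= lt_ik => /eqP.
by rewrite -(nth_pth l (Ordinal lt_in)) -(nth_pth l0 (Ordinal lt_in)).
Qed.

Definition nleaves (k : nat) : nat := \prod_(i < nlev T | (k <= i)%N) dk T i.

Lemma nleaves_gt0 k : (forall i, (i < nlev T)%N -> (0 < dk T i)%N) -> (0 < nleaves k)%N.
Proof. by move=> d_gt0; rewrite prodn_gt0 // => i; apply: d_gt0. Qed.

Lemma nleavesS k (lt_k : (k < nlev T)%N) : nleaves k = (dk T k * nleaves k.+1)%N.
Proof.
rewrite /nleaves (bigD1 (Ordinal lt_k)) //=; congr (_ * _)%N.
by apply: eq_bigl => i; rewrite -val_eqE /= ltn_neqAle eq_sym andbC.
Qed.

Lemma card_paths : #|paths T| = nleaves 0.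
Proof.
rewrite card_dep_ffun foldrE big_map big_enum /nleaves.
by apply: eq_bigr => i _; rewrite card_ord.
Qed.

Lemma card_paths_through k (lt_k : (k < nlev T)%N) (l0 : paths T) (A : pred nat) :
  #|[pred l : paths T | (prefix k l == prefix k l0) && A (coord k l)]| =
  (#|[pred x : 'I_(dk T k) | A x]| * nleaves k.+1)%N.
Proof.
pose F (i : 'I_(nlev T)) : pred 'I_(dk T i) :=
  if (i < k)%N then pred1 (l0 i)
  else if i == k :> nat then [pred x : 'I_(dk T i) | A x] else predT.
have ->: #|[pred l : paths T | (prefix k l == prefix k l0) && A (coord k l)]| =
         #|(family F : simpl_pred (paths T))|.
  apply: eq_card => l; rewrite !inE eq_prefix coordE.
  apply/andP/familyP => [[/forallP eq_l Al] i | Fl].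
    rewrite /F; case: ltnP => [lt_ik | le_ki]; first by have /implyP/(_ lt_ik) := eq_l i.
    by case: eqP => // eq_ik; rewrite inE; move: Al; congr (A (val (l _))); apply: val_inj.
  split; last by have := Fl (Ordinal lt_k); rewrite /F /= (ltnn k) eqxx.
  by apply/forallP => i; apply/implyP => lt_ik; have := Fl i; rewrite /F lt_ik.
rewrite card_family foldrE big_map big_enum (bigD1 (Ordinal lt_k)) //= {1}/F (ltnn k) eqxx.
congr (_ * _)%N; rewrite /nleaves big_mkcond [in RHS]big_mkcond; apply: eq_bigr => i _.
rewrite /F -(inj_eq val_inj) /=; case: ltngtP => // _; first by rewrite card1.
by rewrite cardT size_enum_ord.
Qed.

Lemma card_paths_through_node k (lt_k : (k < nlev T)%N) (l0 : paths T) :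
  #|[pred l : paths T | prefix k l == prefix k l0]| = nleaves k.
Proof.
rewrite (nleavesS lt_k) -(card_ord (dk T k)) -(card_paths_through lt_k l0 predT).
by apply: eq_card => l; rewrite !inE andbT.
Qed.

Lemma card_paths_through_edge k (lt_k : (k < nlev T)%N) (l0 : paths T) x :
  (x < dk T k)%N ->
  #|[pred l : paths T | (prefix k l == prefix k l0) && (coord k l == x)]| = nleaves k.+1.
Proof.
move=> lt_x; rewrite (card_paths_through lt_k l0 (pred1 x)).
by rewrite (@eq_card _ _ (pred1 (Ordinal lt_x))) ?card1 ?mul1n // => y; rewrite !inE -val_eqE.
Qed.

End Paths.

Section Stages.
Variable T : sstree.
Hypothesis wfT : wf_sstree T.
Local Notation stage k l := (sstage T (prefix k l)).

Lemma dk_gt0 k : (k < nlev T)%N -> (0 < dk T k)%N.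
Proof. by case: wfT => d_gt0 _; apply: d_gt0. Qed.

Lemma elab_lt k (lt_k : (k < nlev T)%N) (l : paths T) : (elab k l < dk T k)%N.
Proof.
have [_ /(_ l k lt_k) [lab_lt _]] := wfT.
by apply: lab_lt; rewrite coordE ltn_ord.
Qed.

Lemma card_paths_gt0 : (0 < #|paths T|)%N.
Proof. by rewrite card_paths nleaves_gt0 // => i; apply: dk_gt0. Qed.

Lemma mem_nodes k (l : paths T) : prefix k l \in nodes T k.
Proof. by rewrite mem_undup; apply: map_f; rewrite mem_enum. Qed.

Lemma nodesP k v : v \in nodes T k -> exists l : paths T, v = prefix k l.
Proof. by rewrite mem_undup => /mapP [l _ ->]; exists l. Qed.

Lemma mem_stages k (l : paths T) : stage k l \in stages T k.
Proof. by rewrite mem_undup; apply/map_f/mem_nodes. Qed.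

Lemma stagesP k s : s \in stages T k -> exists l : paths T, s = stage k l.
Proof. by rewrite mem_undup => /mapP [v /nodesP [l ->] ->]; exists l. Qed.

Lemma hcount_gt0 k s : s \in stages T k -> (0 < hcount T k s)%N.
Proof.
case/stagesP => l ->; rewrite -has_count; apply/hasP.
by exists (prefix k l); rewrite ?mem_nodes.
Qed.

Lemma card_paths_by_node k (Q : pred (seq nat)) (P : pred (paths T)) :
  #|[pred l : paths T | Q (prefix k l) && P l]| =
  (\sum_(v <- nodes T k | Q v) #|[pred l : paths T | (prefix k l == v) && P l]|)%N.
Proof.
rewrite -sum1_card big_mkcond /=.
under [RHS]eq_bigr => v _ do rewrite -sum1_card big_mkcond /=.
rewrite exchange_big /=; apply: eq_bigr => l _; rewrite inE big_mkcond /=.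
rewrite (bigD1_seq (prefix k l)) ?mem_nodes ?undup_uniq //= inE eqxx /=.
rewrite big1 => [|v /negbTE neq_v]; first by rewrite addn0; case: (Q _); case: (P l).
by rewrite inE eq_sym neq_v /=; case: (Q v).
Qed.

Lemma card_stage k (lt_k : (k < nlev T)%N) s :
  #|[pred l : paths T | stage k l == s]| = (hcount T k s * nleaves T k)%N.
Proof.
rewrite (eq_card (B := [pred l | (stage k l == s) && predT l])) => [|l]; last first.
  by rewrite !inE andbT.
rewrite (card_paths_by_node k (fun v => sstage T v == s)) big_seq_cond.
rewrite (eq_bigr (fun=> nleaves T k)).
  by rewrite -big_seq_cond big_const_seq iter_addn_0 mulnC.
move=> v /andP [/nodesP [l0 ->] _]; rewrite -(card_paths_through_node lt_k l0).
by apply: eq_card => l; rewrite !inE andbT.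
Qed.

Lemma card_stage_label k (lt_k : (k < nlev T)%N) s j : (j < dk T k)%N ->
  #|[pred l : paths T | (stage k l == s) && (elab k l == j)]| =
  (hcount T k s * nleaves T k.+1)%N.
Proof.
move=> lt_j; rewrite (card_paths_by_node k (fun v => sstage T v == s)) big_seq_cond.
rewrite (eq_bigr (fun=> nleaves T k.+1)).
  by rewrite -big_seq_cond big_const_seq iter_addn_0 mulnC.
move=> v /andP [/nodesP [l0 ->] _].
have [_ /(_ l0 k lt_k) [lab_lt lab_inj]] := wfT.
have [x lt_x <-] := inj_in_ltn_onto lab_lt lab_inj lt_j.
rewrite -(card_paths_through_edge lt_k l0 lt_x); apply: eq_card => l; rewrite !inE.
case: eqP => //= eq_pre; rewrite /elab eq_pre (inj_in_eq lab_inj) //.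
by rewrite inE coordE ltn_ord.
Qed.

Lemma card_stage_label_gt0 k (lt_k : (k < nlev T)%N) s : s \in stages T k ->
  forall j, (j < dk T k)%N ->
  (0 < #|[pred l : paths T | (stage k l == s) && (elab k l == j)]|)%N.
Proof.
move=> s_in j lt_j; rewrite card_stage_label // muln_gt0 hcount_gt0 //.
by rewrite nleaves_gt0 // => i; apply: dk_gt0.
Qed.

End Stages.

Section Hyperparameters.
Variables (R : realType) (T : sstree) (alpha : R).
Hypothesis wfT : wf_sstree T.
Local Notation stage k l := (sstage T (prefix k l)).
Local Notation w := (alpha / #|paths T|%:R).

Lemma adotE k (lt_k : (k < nlev T)%N) s : s \in stages T k ->
  adot T alpha k s = w * (hcount T k s * nleaves T k)%:R.
Proof.
have paths_neq0 : #|paths T|%:R != 0 :> R by rewrite pnatr_eq0 -lt0n (card_paths_gt0 wfT).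
elim: k lt_k s => [|k IHk] lt_k s s_in.
  rewrite -card_stage //; have [l0 ->] := stagesP s_in.
  suff -> : #|[pred l : paths T | stage 0 l == stage 0 l0]| = #|paths T| by rewrite divfK.
  by apply: eq_card => l; rewrite !inE /prefix !take0 eqxx.
have lt_k' : (k < nlev T)%N by apply: ltn_trans lt_k.
rewrite /= big_seq_cond (eq_bigr (fun=> w * (nleaves T k.+1)%:R)); last first.
  move=> v /andP [/nodesP [l ->] _]; rewrite /prefix take_takel // -/(prefix k l).
  have h_gt0 := hcount_gt0 (mem_stages k l).
  rewrite IHk ?mem_stages // (nleavesS lt_k') !natrM; field.
  by rewrite !pnatr_eq0 -!lt0n dk_gt0 // h_gt0 (card_paths_gt0 wfT).
by rewrite -big_seq_cond sumr_const_seq -mulrnAr -mulrnA mulnC.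
Qed.

Lemma aedgeE k (lt_k : (k < nlev T)%N) s : s \in stages T k ->
  forall j, (j < dk T k)%N ->
  aedge T alpha k s j = w * #|[pred l : paths T | (stage k l == s) && (elab k l == j)]|%:R.
Proof.
move=> s_in j lt_j; rewrite card_stage_label // /aedge adotE // (nleavesS lt_k) !natrM.
by field; rewrite !pnatr_eq0 -!lt0n (card_paths_gt0 wfT) dk_gt0.
Qed.

Lemma aedge_gt0 k (lt_k : (k < nlev T)%N) s : s \in stages T k ->
  forall j, (j < dk T k)%N -> 0 < alpha -> 0 < aedge T alpha k s j.
Proof.
move=> s_in j lt_j alpha_gt0; rewrite aedgeE // mulr_gt0 ?divr_gt0 ?ltr0n ?(card_paths_gt0 wfT) //.
exact: card_stage_label_gt0.
Qed.

End Hyperparameters.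

Section MaximumLikelihood.
Variables (R : realType) (T : sstree).
Hypothesis wfT : wf_sstree T.
Local Notation stage k l := (sstage T (prefix k l)).

Definition stage_count (c : paths T -> R) k s j : R :=
  \sum_(l | (stage k l == s) && (elab k l == j)) c l.

Definition stage_total (c : paths T -> R) k s : R := \sum_(j < dk T k) stage_count c k s j.

(* the value at unused stages only serves to make [mle c] a member of the model *)
Definition mle_param (c : paths T -> R) k s j : R :=
  if s \in stages T k then stage_count c k s j / stage_total c k s else (dk T k)%:R^-1.

Definition mle (c : paths T -> R) (l : paths T) : R :=
  \prod_(k < nlev T) mle_param c k (stage k l) (elab k l).

Definition loglik (c q : paths T -> R) : R := \sum_l c l * ln (q l).

Lemma sum_by_stage_label k (lt_k : (k < nlev T)%N) (c : paths T -> R) (g : nat -> nat -> R) :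
  \sum_l c l * g (stage k l) (elab k l) =
  \sum_(s <- stages T k) \sum_(j < dk T k) stage_count c k s j * g s j.
Proof.
rewrite (partition_big_seq (p := fun l => stage k l) (r := stages T k)) ?undup_uniq //.
  2: by move=> l _; apply: mem_stages.
apply: eq_bigr => s _; rewrite -(big_mkord xpredT (fun j => stage_count c k s j * g s j)).
rewrite (partition_big_seq (p := elab k) (r := index_iota 0 (dk T k))) ?iota_uniq //.
  2: by move=> l _; rewrite mem_index_iota elab_lt.
apply: eq_bigr => j _; rewrite /stage_count big_distrl /=.
by apply: eq_bigr => l /andP [/eqP -> /eqP ->].
Qed.

Lemma loglik_stages (c : paths T -> R) (th : nat -> nat -> nat -> R) (q : paths T -> R) :
  (forall k s j, (k < nlev T)%N -> (j < dk T k)%N -> 0 < th k s j) ->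
  (forall l, q l = \prod_(k < nlev T) th k (stage k l) (elab k l)) ->
  loglik c q =
  \sum_(k < nlev T) \sum_(s <- stages T k) \sum_(j < dk T k) stage_count c k s j * ln (th k s j).
Proof.
move=> th_gt0 q_th; rewrite /loglik.
rewrite (eq_bigr (fun l => \sum_(k < nlev T) c l * ln (th k (stage k l) (elab k l)))) => [|l _].
  rewrite exchange_big; apply: eq_bigr => k _.
  exact: (sum_by_stage_label (ltn_ord k) c (fun s j => ln (th k s j))).
rewrite q_th ln_prod ?mulr_sumr // => k _.
exact: th_gt0 (ltn_ord k) (elab_lt wfT (ltn_ord k) l).
Qed.

Variable c : paths T -> R.
Hypothesis c_gt0 : forall l, 0 < c l.

Lemma stage_count_gt0 k (lt_k : (k < nlev T)%N) s (s_in : s \in stages T k) j :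
  (j < dk T k)%N -> 0 < stage_count c k s j.
Proof.
move=> lt_j; have /card_gt0P [l1 l1_in] := card_stage_label_gt0 wfT lt_k s_in lt_j.
rewrite /stage_count (bigD1 l1) //= ltr_wpDr ?c_gt0 //.
by rewrite sumr_ge0 // => l _; apply/ltW.
Qed.

Lemma stage_total_gt0 k (lt_k : (k < nlev T)%N) s : s \in stages T k -> 0 < stage_total c k s.
Proof.
move=> s_in; rewrite /stage_total (bigD1 (Ordinal (dk_gt0 wfT lt_k))) //= ltr_wpDr //.
  by rewrite sumr_ge0 // => j _; apply/ltW/stage_count_gt0.
exact: stage_count_gt0 (dk_gt0 wfT lt_k).
Qed.

Lemma mle_param_gt0 k s j : (k < nlev T)%N -> (j < dk T k)%N -> 0 < mle_param c k s j.
Proof.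
move=> lt_k lt_j; rewrite /mle_param; case: ifP => s_in.
  by rewrite divr_gt0 ?stage_count_gt0 ?stage_total_gt0.
by rewrite invr_gt0 ltr0n dk_gt0.
Qed.

Lemma mle_model : model (mle c).
Proof.
exists (mle_param c); split=> // k s lt_k; split=> [j|]; first exact: mle_param_gt0.
rewrite /mle_param; have [s_in | _] := boolP (s \in stages T k).
  by rewrite -big_distrl /= divff ?gt_eqF ?stage_total_gt0.
by rewrite sumr_const card_ord -[_ *+ _]mulr_natl mulfV // pnatr_eq0 -lt0n dk_gt0.
Qed.

Lemma leif_loglik_mle q : model q ->
  loglik c q <= loglik c (mle c) ?= iff [forall l, q l == mle c l].
Proof.
case=> th [th_ok q_th].
have th_gt0 k s j : (k < nlev T)%N -> (j < dk T k)%N -> 0 < th k s j.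
  by move=> lt_k lt_j; apply: (proj1 (th_ok k s lt_k)).
have gibbs_stage (k : 'I_(nlev T)) s : s \in stages T k ->
    \sum_(j < dk T k) stage_count c k s j * ln (th k s j) <=
    \sum_(j < dk T k) stage_count c k s j * ln (mle_param c k s j)
    ?= iff [forall j : 'I_(dk T k), th k s j == mle_param c k s j].
  move=> s_in; rewrite /mle_param s_in; apply: leif_gibbs => [j|j|].
  - exact: stage_count_gt0.
  - exact: th_gt0.
  - by have [_ ->] := th_ok k s (ltn_ord k).
have loglik_leif : loglik c q <= loglik c (mle c) ?= iff
    [forall k : 'I_(nlev T), all (fun s => [forall j : 'I_(dk T k),
       th k s j == mle_param c k s j]) (stages T k)].
  rewrite (loglik_stages c th_gt0 q_th) (loglik_stages c (th := mle_param c)) //.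
    by apply: (@leif_sum _ _ predT) => k _; apply: leif_sum_seq; apply: gibbs_stage.
  by move=> k s j; apply: mle_param_gt0.
split; first exact: loglik_leif.
apply/idP/forallP => [| q_mle]; last by apply/eqP/eq_bigr => l _; rewrite (eqP (q_mle l)).
rewrite loglik_leif.2 => /forallP th_mle l; rewrite q_th; apply/eqP/eq_bigr => k _.
have /allP/(_ _ (mem_stages k l))/forallP := th_mle k.
by move/(_ (Ordinal (elab_lt wfT (ltn_ord k) l)))/eqP.
Qed.

End MaximumLikelihood.

Lemma mle_stat_equiv (R : realType) (T T' : sstree) (phi : paths T -> paths T') :
  wf_sstree T -> wf_sstree T' -> stat_equiv R phi ->
  forall (c : paths T -> R) (c' : paths T' -> R),
  (forall l, 0 < c l) -> (forall l', 0 < c' l') -> (forall l, c' (phi l) = c l) ->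
  forall l, mle c l = mle c' (phi l).
Proof.
move=> wfT wfT' [phi_bij model_phi] c c' c_gt0 c'_gt0 c_phi.
have loglik_phi (q : paths T' -> R) : loglik c' q = loglik c (q \o phi).
  rewrite /loglik (reindex phi) /=; last exact: onW_bij.
  by apply: eq_bigr => l _; rewrite c_phi.
have [p' [p'_model mle_p']] := (model_phi (mle c)).1 (mle_model wfT c_gt0).
have mle'_model : model (mle c' \o phi).
  by apply/model_phi; exists (mle c'); split=> //; apply: mle_model.
have leif_T' := leif_loglik_mle wfT' c'_gt0 p'_model.
have /forallP p'_mle : [forall l', p' l' == mle c' l'].
  rewrite -leif_T'.2 eq_le leif_T'.1 !loglik_phi.
  have -> : loglik c (p' \o phi) = loglik c (mle c).
    by apply: eq_bigr => l _; rewrite /= mle_p'.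
  exact: (leif_loglik_mle wfT c_gt0 mle'_model).1.
by move=> l; rewrite mle_p'; apply/eqP.
Qed.

Section Score.
Variables (R : realType) (T : sstree) (alpha : R).
Hypotheses (wfT : wf_sstree T) (alpha_gt0 : 0 < alpha).
Local Notation stage k l := (sstage T (prefix k l)).
Local Notation w := (alpha / #|paths T|%:R).

Definition pseudo_counts (N : paths T -> nat) (l : paths T) : R := w + (N l)%:R.

Lemma pseudo_counts_gt0 (N : paths T -> nat) l : 0 < pseudo_counts N l.
Proof. by rewrite ltr_wpDr // divr_gt0 // ltr0n (card_paths_gt0 wfT). Qed.

Lemma CS_BDeuE (N : paths T -> nat) :
  CS_BDeu N alpha =
  \prod_(k < nlev T) \prod_(s <- stages T k) dirmult (dk T k) (aedge T alpha k s) (ncount N k s).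
Proof. by []. Qed.

Lemma stage_count_pseudo_counts (N : paths T -> nat) k (lt_k : (k < nlev T)%N) s :
  s \in stages T k -> forall j, (j < dk T k)%N ->
  stage_count (pseudo_counts N) k s j = aedge T alpha k s j + (ncount N k s j)%:R.
Proof.
move=> s_in j lt_j; rewrite /stage_count big_split /= aedgeE // natr_sum; congr (_ + _).
by rewrite mulr_natr; apply: sumr_const.
Qed.

Lemma stage_total_pseudo_counts (N : paths T -> nat) k (lt_k : (k < nlev T)%N) s :
  s \in stages T k ->
  stage_total (pseudo_counts N) k s =
  \sum_(j < dk T k) aedge T alpha k s j + (\sum_(j < dk T k) ncount N k s j)%:R.
Proof.
move=> s_in; rewrite /stage_total natr_sum -big_split /=.
by apply: eq_bigr => j _; apply: stage_count_pseudo_counts.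
Qed.

Lemma aedge_sum_gt0 k (lt_k : (k < nlev T)%N) s : s \in stages T k ->
  0 < \sum_(j < dk T k) aedge T alpha k s j.
Proof.
move=> s_in; rewrite (bigD1 (Ordinal (dk_gt0 wfT lt_k))) //= ltr_wpDr ?aedge_gt0 ?dk_gt0 //.
by rewrite sumr_ge0 // => j _; apply/ltW/aedge_gt0.
Qed.

Lemma ncount_cons (N N1 : paths T -> nat) l0 : (forall l, N1 l = (l0 == l) + N l)%N ->
  forall k s j, ncount N1 k s j = (((stage k l0 == s) && (elab k l0 == j)) + ncount N k s j)%N.
Proof.
move=> N1E k s j; rewrite /ncount (eq_bigr _ (fun l _ => N1E l)) big_split /=; congr addn.
rewrite big_mkcond (bigD1 l0) //= eqxx big1 ?addn0 => [|l /negbTE neq_l]; last first.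
  by rewrite [l0 == l]eq_sym neq_l; case: ifP.
by case: ifP.
Qed.

Lemma CS_BDeu_cons (N N1 : paths T -> nat) l0 : (forall l, N1 l = (l0 == l) + N l)%N ->
  CS_BDeu N1 alpha = CS_BDeu N alpha * mle (pseudo_counts N) l0.
Proof.
move=> N1E; rewrite !CS_BDeuE /mle -big_split /=; apply: eq_bigr => k _.
have lt_k := ltn_ord k; have s0_in := mem_stages k l0; have lt_j0 := elab_lt wfT lt_k l0.
rewrite (bigD1_seq (stage k l0)) ?undup_uniq //=.
rewrite [in RHS](bigD1_seq (stage k l0)) ?undup_uniq //=.
rewrite (dirmult_incr (n := ncount N k (stage k l0)) lt_j0) ?aedge_sum_gt0 //.
  2: by move=> j; rewrite (ncount_cons N1E) eqxx.
rewrite /mle_param s0_in stage_count_pseudo_counts // stage_total_pseudo_counts //.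
rewrite mulrAC; congr (_ * _ * _); apply: eq_bigr => s neq_s; apply: eq_dirmult => j.
by rewrite (ncount_cons N1E) eq_sym (negbTE neq_s).
Qed.

Lemma CS_BDeu_nil (N : paths T -> nat) : (forall l, N l = 0)%N -> CS_BDeu N alpha = 1.
Proof.
move=> N0; rewrite CS_BDeuE big1 // => k _; rewrite big1_seq // => s _.
by apply: dirmult0 => j; rewrite /ncount big1.
Qed.

End Score.

Lemma CS_BDeu_stat_equiv_tally (R : realType) (T T' : sstree) (phi : paths T -> paths T')
    (alpha : R) :
  wf_sstree T -> wf_sstree T' -> stat_equiv R phi -> 0 < alpha ->
  forall (obs : seq (paths T)) (N : paths T -> nat) (N' : paths T' -> nat),
  (forall l, N l = count_mem l obs) -> (forall l', N' l' = count_mem l' (map phi obs)) ->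
  CS_BDeu N alpha = CS_BDeu N' alpha.
Proof.
move=> wfT wfT' equiv alpha_gt0; have phi_bij := equiv.1.
elim=> [|l0 obs IHobs] N N' N_obs N'_obs; first by rewrite !CS_BDeu_nil.
have N_cons l : N l = ((l0 == l) + count_mem l obs)%N by rewrite N_obs.
have N'_cons l' : N' l' = ((phi l0 == l') + count_mem l' (map phi obs))%N by rewrite N'_obs.
rewrite (CS_BDeu_cons wfT alpha_gt0 N_cons) (CS_BDeu_cons wfT' alpha_gt0 N'_cons).
rewrite (IHobs _ _ (fun=> erefl) (fun=> erefl)); congr (_ * _).
apply: (mle_stat_equiv wfT wfT' equiv) => [l|l'|l]; rewrite ?pseudo_counts_gt0 //.
rewrite /pseudo_counts count_mem_map_inj; last exact: bij_inj.
by rewrite (bij_eq_card phi_bij).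
Qed.

Theorem mainTheorem6 (R : realType) (T T' : sstree)
    (phi : paths T -> paths T') (alpha : R)
    (N : paths T -> nat) (N' : paths T' -> nat) :
  wf_sstree T -> wf_sstree T' ->
  stat_equiv R phi ->
  0 < alpha ->
  (forall l, N' (phi l) = N l) ->
  CS_BDeu N alpha = CS_BDeu N' alpha.
Proof.
move=> wfT wfT' equiv alpha_gt0 N'_N.
have [psi phiK psiK] := equiv.1.
have [obs N_obs] := exists_seq_count_mem N.
apply: (CS_BDeu_stat_equiv_tally wfT wfT' equiv alpha_gt0 N_obs) => l'.
by rewrite -[l']psiK N'_N N_obs count_mem_map_inj //; apply: can_inj phiK.
Qed.
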